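(* Let $(G(f,g),h)$ and $(G(\bar f,\bar g),\bar h)$ be two $U(1)$-invariant gradient steady Ricci solitons on $E$, with $h=h(s)$ and $\bar h=\bar h(s)$, whose metrics extend smoothly over the zero section. Suppose $g(0)=\bar g(0)$, and suppose the two constants agree: $\mathcal C=\bar{\mathcal C}>0$. Then $(G(f,g),h_s)=(G(\bar f,\bar g),\bar h_s)$.
   Context: $(B^d,\check g,\check J,\check\omega)$ is a Fano Kähler–Einstein manifold of real dimension $d$ with $\mathrm{Rc}(\check g)=(d+2)\check g$. $E\to B$ is a complex line bundle with $c_1(E)=q\,c_1(B)$ in $H^2(B;\mathbb R)$ for some $q\in\mathbb R$, and $P\to B$ is the associated principal $U(1)$-bundle. Then $E=([0,\infty)\times P)/\!\sim$, where the circles over $\{0\}\times P$ are collapsed, and $E\setminus B_0\cong(0,\infty)\times P$, with $B_0$ the zero section. For $a,b>0$, $\hat g(a,b)$ is the metric on $P$ making $P\to(B,b^2\check g)$ a Riemannian submersion with totally geodesic fibers of length $2\pi a$ and with horizontal distribution that of the $U(1)$-connection with curvature $q(d+2)\check\omega$. With $s$ the coordinate on $(0,\infty)$, $G(f,g)=ds^2+\hat g(f(s),g(s))$ for positive functions $f,g$. A gradient steady soliton of this form satisfies $\mathrm{Rc}(G)=\nabla^2h$. Its scalar curvature satisfies $S+h_s^2\equiv\mathcal C$ for a constant $\mathcal C$; since $h_s(0)=0$, $\mathcal C$ is the maximal scalar curvature. *)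

From Stdlib Require Import Reals.
Open Scope R_scope.

Definition is_deriv (F F' : R -> R) : Prop :=
  forall x, derivable_pt_lim F x (F' x).

Definition smooth (F : R -> R) : Prop :=
  exists D : nat -> R -> R, D O = F /\ forall n, is_deriv (D n) (D (S n)).

(* Ricci components of G(f,g) = ds^2 + f^2 sigma^2 + g^2 (pullback of check g),
   with d = dim_R B, Rc(check g) = (d+2) check g, d sigma = Q check omega,
   Q = q (d+2).  Components are w.r.t. unit vectors: radial (ss), fibre (vv),
   horizontal (hh). f1,f2,g1,g2 are the first and second s-derivatives. *)
Definition Rc_ss (d : R) (f f1 f2 g g1 g2 : R) : R :=
  - f2 / f - d * g2 / g.
Definition Rc_vv (d q : R) (f f1 f2 g g1 g2 : R) : R :=
  - f2 / f - d * f1 * g1 / (f * g)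
  + d * (q * (d + 2)) ^ 2 * f ^ 2 / (4 * g ^ 4).
Definition Rc_hh (d q : R) (f f1 f2 g g1 g2 : R) : R :=
  - g2 / g - (d - 1) * (g1 / g) ^ 2 - f1 * g1 / (f * g)
  + (d + 2) / g ^ 2 - (q * (d + 2)) ^ 2 * f ^ 2 / (2 * g ^ 4).

Definition scal (d q : R) (f f1 f2 g g1 g2 : R) : R :=
  Rc_ss d f f1 f2 g g1 g2 + Rc_vv d q f f1 f2 g g1 g2
  + d * Rc_hh d q f f1 f2 g g1 g2.

(* (G(f,g), h) is a U(1)-invariant gradient steady Ricci soliton
   Rc(G) = Hess_G h on E = ([0,oo) x P)/~, with h = h(s), whose metric (and
   potential) extend smoothly over the zero section, and whose constant
   S + h_s^2 equals C.  The functions are given on all of R: their values for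
   s < 0 are the odd (f) / even (g, h) extensions, and smooth extension over
   the zero section means these extensions are smooth with f'(0) = 1
   (fibres are circles of length 2 pi f(s) collapsing at s = 0). *)
Definition steady_soliton (d q C : R) (f g h : R -> R) : Prop :=
  exists f1 f2 g1 g2 h1 h2 : R -> R,
    smooth f /\ smooth g /\ smooth h /\
    is_deriv f f1 /\ is_deriv f1 f2 /\
    is_deriv g g1 /\ is_deriv g1 g2 /\
    is_deriv h h1 /\ is_deriv h1 h2 /\
    (forall x, f (- x) = - f x) /\
    (forall x, g (- x) = g x) /\
    (forall x, h (- x) = h x) /\
    f1 0 = 1 /\
    (forall s, 0 < s -> 0 < f s) /\
    (forall s, 0 <= s -> 0 < g s) /\
    (* Rc = Hess h on E \ B_0 = (0,oo) x P *)
    (forall s, 0 < s ->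
       Rc_ss d (f s) (f1 s) (f2 s) (g s) (g1 s) (g2 s) = h2 s /\
       Rc_vv d q (f s) (f1 s) (f2 s) (g s) (g1 s) (g2 s)
         = h1 s * f1 s / f s /\
       Rc_hh d q (f s) (f1 s) (f2 s) (g s) (g1 s) (g2 s)
         = h1 s * g1 s / g s) /\
    (forall s, 0 < s ->
       scal d q (f s) (f1 s) (f2 s) (g s) (g1 s) (g2 s) + (h1 s) ^ 2 = C).

From Stdlib Require Import Reals Lra Psatz.
Open Scope R_scope.

(* Both solitons solve, for s > 0, one ODE system in the phase variables
   (f, f_s, g, g_s, h_s):  f'' = F,  (f g')' = f G,  (f h')' = f H,  with F, G, H
   locally Lipschitz where g > 0; the h-equation comes from taking the trace,
   S + h_s^2 = C.  At the zero section
   the data agree: f = 0, f' = 1, g' = h' = 0 and g(0) = gb(0).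
   Uniqueness is a contraction argument: if the states agree at a, the maximum M of
   their l1-distance on [a, a + δ] satisfies M <= K M δ, so M = 0 for δ small.  The
   singularity f(0) = 0 is handled by the flux form: integrating (f g')' = f G gives
   f (g' - gb') = O(M s^2), while f >= s/2, hence g' - gb' = O(M s).  Finitely many
   such intervals cover [0, s]. *)

Section BoundedLipschitz.

Variables (T : Type) (dist : T -> T -> R) (D : T -> Prop).
Hypothesis dist_ge0 : forall u v, 0 <= dist u v.

Definition bounded_lipschitz_on (F : T -> R) : Prop :=
  exists K, 0 <= K /\ forall u v, D u -> D v ->
    Rabs (F u) <= K /\ Rabs (F u - F v) <= K * dist u v.

Lemma bounded_lipschitz_on_const c : bounded_lipschitz_on (fun _ => c).
Proof.
  exists (Rabs c); split; [apply Rabs_pos |]; intros u v _ _.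
  rewrite Rminus_diag, Rabs_R0.
  pose proof (Rabs_pos c); pose proof (dist_ge0 u v); split; [lra | nra].
Qed.

Lemma bounded_lipschitz_on_plus F G :
  bounded_lipschitz_on F -> bounded_lipschitz_on G ->
  bounded_lipschitz_on (fun u => F u + G u).
Proof.
  intros [K1 [HK1 HF]] [K2 [HK2 HG]]; exists (K1 + K2); split; [lra |].
  intros u v Du Dv; destruct (HF u v Du Dv), (HG u v Du Dv).
  replace (F u + G u - (F v + G v)) with ((F u - F v) + (G u - G v)) by ring.
  split; eapply Rle_trans; try apply Rabs_triang; lra.
Qed.

Lemma bounded_lipschitz_on_opp F :
  bounded_lipschitz_on F -> bounded_lipschitz_on (fun u => - F u).
Proof.
  intros [K [HK HF]]; exists K; split; [lra |]; intros u v Du Dv.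
  replace (- F u - - F v) with (- (F u - F v)) by ring.
  rewrite !Rabs_Ropp; auto.
Qed.

Lemma bounded_lipschitz_on_minus F G :
  bounded_lipschitz_on F -> bounded_lipschitz_on G ->
  bounded_lipschitz_on (fun u => F u - G u).
Proof.
  intros HF HG; exact (bounded_lipschitz_on_plus _ _ HF (bounded_lipschitz_on_opp _ HG)).
Qed.

Lemma bounded_lipschitz_on_mult F G :
  bounded_lipschitz_on F -> bounded_lipschitz_on G ->
  bounded_lipschitz_on (fun u => F u * G u).
Proof.
  intros [K1 [HK1 HF]] [K2 [HK2 HG]]; exists (2 * (K1 * K2)); split; [nra |].
  intros u v Du Dv; destruct (HF u v Du Dv) as [Fu dF], (HG u v Du Dv) as [Gu dG].
  destruct (HG v u Dv Du) as [Gv _].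
  pose proof (dist_ge0 u v); pose proof (Rabs_pos (F u)); pose proof (Rabs_pos (G v)).
  split.
  - rewrite Rabs_mult; pose proof (Rabs_pos (G u)); nra.
  - replace (F u * G u - F v * G v) with (F u * (G u - G v) + G v * (F u - F v)) by ring.
    eapply Rle_trans; [apply Rabs_triang |]; rewrite !Rabs_mult.
    pose proof (Rabs_pos (G u - G v)); pose proof (Rabs_pos (F u - F v)).
    assert (Rabs (F u) * Rabs (G u - G v) <= K1 * (K2 * dist u v))
      by (apply Rmult_le_compat; auto).
    assert (Rabs (G v) * Rabs (F u - F v) <= K2 * (K1 * dist u v))
      by (apply Rmult_le_compat; auto).
    lra.
Qed.

Lemma bounded_lipschitz_on_pow F n :
  bounded_lipschitz_on F -> bounded_lipschitz_on (fun u => F u ^ n).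
Proof.
  intros HF; induction n as [| n IH]; simpl.
  - apply bounded_lipschitz_on_const.
  - exact (bounded_lipschitz_on_mult _ _ HF IH).
Qed.

Lemma bounded_lipschitz_on_inv F :
  (exists c, 0 < c /\ forall u, D u -> c <= F u) ->
  bounded_lipschitz_on F -> bounded_lipschitz_on (fun u => / F u).
Proof.
  intros [c [Hc HFc]] [K [HK HF]].
  assert (Hc2 : 0 < c * c) by nra.
  exists (/ c + K / (c * c)); split.
  { pose proof (Rinv_0_lt_compat c Hc); pose proof (Rinv_0_lt_compat _ Hc2).
    unfold Rdiv; nra. }
  intros u v Du Dv; destruct (HF u v Du Dv) as [_ dF].
  pose proof (HFc u Du); pose proof (HFc v Dv); pose proof (dist_ge0 u v).
  assert (Hcuv : c * c <= F u * F v) by (apply Rmult_le_compat; lra).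
  assert (Hinv : / (F u * F v) <= / (c * c)) by (apply Rinv_le_contravar; lra).
  assert (Hu : Rabs (/ F u) <= / c).
  { rewrite Rabs_inv, Rabs_pos_eq by lra; apply Rinv_le_contravar; lra. }
  assert (Huv : Rabs (/ F u - / F v) <= K / (c * c) * dist u v).
  { replace (/ F u - / F v) with ((F v - F u) * / (F u * F v)) by (field; lra).
    rewrite Rabs_mult, Rabs_minus_sym, (Rabs_pos_eq (/ (F u * F v)))
      by (apply Rlt_le, Rinv_0_lt_compat; nra).
    replace (K / (c * c) * dist u v) with ((K * dist u v) * / (c * c)) by (unfold Rdiv; ring).
    apply Rmult_le_compat; auto using Rabs_pos.
    apply Rlt_le, Rinv_0_lt_compat; nra. }
  pose proof (Rinv_0_lt_compat c Hc); pose proof (Rinv_0_lt_compat _ Hc2).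
  assert (0 <= K / (c * c)) by (unfold Rdiv; nra).
  split; nra.
Qed.

End BoundedLipschitz.

Arguments bounded_lipschitz_on {T}.

Record state := State { s_f : R; s_df : R; s_g : R; s_dg : R; s_dh : R }.

Definition state_dist (u v : state) : R :=
  Rabs (s_f u - s_f v) + Rabs (s_df u - s_df v) + Rabs (s_g u - s_g v)
  + Rabs (s_dg u - s_dg v) + Rabs (s_dh u - s_dh v).

Definition state_norm (u : state) : R := state_dist u (State 0 0 0 0 0).

Lemma state_dist_coord u v :
  Rabs (s_f u - s_f v) <= state_dist u v /\ Rabs (s_df u - s_df v) <= state_dist u v /\
  Rabs (s_g u - s_g v) <= state_dist u v /\ Rabs (s_dg u - s_dg v) <= state_dist u v /\
  Rabs (s_dh u - s_dh v) <= state_dist u v.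
Proof.
  unfold state_dist.
  pose proof (Rabs_pos (s_f u - s_f v)); pose proof (Rabs_pos (s_df u - s_df v));
  pose proof (Rabs_pos (s_g u - s_g v)); pose proof (Rabs_pos (s_dg u - s_dg v));
  pose proof (Rabs_pos (s_dh u - s_dh v)).
  lra.
Qed.

Lemma state_dist_ge0 u v : 0 <= state_dist u v.
Proof.
  destruct (state_dist_coord u v) as [H _]; pose proof (Rabs_pos (s_f u - s_f v)); lra.
Qed.

Lemma state_dist_eq0 u v : state_dist u v = 0 -> u = v.
Proof.
  intros H0; destruct (state_dist_coord u v) as (H1 & H2 & H3 & H4 & H5).
  rewrite H0 in *.
  assert (E : forall x y, Rabs (x - y) <= 0 -> x = y).
  { intros x y Hxy; pose proof (Rle_abs (x - y)); pose proof (Rle_abs (- (x - y)));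
    rewrite Rabs_Ropp in *; lra. }
  destruct u, v; simpl in *; f_equal; auto.
Qed.

Lemma state_norm_coord u :
  Rabs (s_f u) <= state_norm u /\ Rabs (s_df u) <= state_norm u /\
  Rabs (s_g u) <= state_norm u /\ Rabs (s_dg u) <= state_norm u /\
  Rabs (s_dh u) <= state_norm u.
Proof.
  pose proof (state_dist_coord u (State 0 0 0 0 0)) as H; simpl in H.
  rewrite !Rminus_0_r in H; exact H.
Qed.

Definition state_box (B m : R) (u : state) : Prop := state_norm u <= B /\ m <= s_g u.

Section StateBox.

Variables B m : R.
Hypothesis m_pos : 0 < m.

Lemma bounded_lipschitz_on_coord (p : state -> R) :
  (forall u, Rabs (p u) <= state_norm u) ->
  (forall u v, Rabs (p u - p v) <= state_dist u v) ->
  bounded_lipschitz_on state_dist (state_box B m) p.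
Proof.
  intros Hp Hpd; exists (1 + Rabs B); split; [pose proof (Rabs_pos B); lra |].
  intros u v [Bu _] _; pose proof (Rle_abs B); pose proof (Hp u);
  pose proof (Hpd u v); pose proof (state_dist_ge0 u v); pose proof (Rabs_pos B).
  split; [lra | nra].
Qed.

Lemma state_box_g_lower : exists c, 0 < c /\ forall u, state_box B m u -> c <= s_g u.
Proof. exists m; split; [exact m_pos | intros u [_ Hu]; exact Hu]. Qed.

Lemma state_box_g_pow_lower k n :
  0 < k -> exists c, 0 < c /\ forall u, state_box B m u -> c <= k * s_g u ^ n.
Proof.
  intros Hk; exists (k * m ^ n); split; [apply Rmult_lt_0_compat; auto using pow_lt |].
  intros u [_ Hu]; apply Rmult_le_compat_l; [lra |].
  apply pow_incr; lra.
Qed.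

End StateBox.

Definition rhs_f (d Q : R) (u : state) : R :=
  - d * s_df u * s_dg u / s_g u + d * Q ^ 2 * s_f u ^ 3 / (4 * s_g u ^ 4) - s_dh u * s_df u.
Definition rhs_g (d Q : R) (u : state) : R :=
  - (d - 1) * s_dg u ^ 2 / s_g u + (d + 2) / s_g u - Q ^ 2 * s_f u ^ 2 / (2 * s_g u ^ 3)
  - s_dh u * s_dg u.
Definition rhs_h (d C : R) (u : state) : R :=
  C - s_dh u ^ 2 - d * s_dh u * s_dg u / s_g u.

Lemma rhs_bounded_lipschitz d Q C B m : 0 < m ->
  bounded_lipschitz_on state_dist (state_box B m) (rhs_f d Q) /\
  bounded_lipschitz_on state_dist (state_box B m) (rhs_g d Q) /\
  bounded_lipschitz_on state_dist (state_box B m) (rhs_h d C).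
Proof.
  intros Hm; unfold rhs_f, rhs_g, rhs_h, Rdiv.
  repeat split;
  repeat first
    [ apply bounded_lipschitz_on_const
    | apply bounded_lipschitz_on_minus | apply bounded_lipschitz_on_plus
    | apply bounded_lipschitz_on_opp | apply bounded_lipschitz_on_mult
    | apply bounded_lipschitz_on_pow | apply bounded_lipschitz_on_inv
    | apply state_dist_ge0
    | apply state_box_g_lower; exact Hm
    | apply state_box_g_pow_lower; [exact Hm | lra]
    | apply bounded_lipschitz_on_coord; intros u; [| intros v];
      apply state_norm_coord || apply state_dist_coord ].
Qed.

Lemma diff_bound_mvt (u u' v v' : R -> R) a x L :
  a <= x -> is_deriv u u' -> is_deriv v v' -> u a = v a ->
  (forall t, a < t < x -> Rabs (u' t - v' t) <= L) ->
  Rabs (u x - v x) <= L * (x - a).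
Proof.
  intros Hax Hu Hv Ha HL; destruct (Req_dec a x) as [<- | Hne].
  - rewrite Ha, Rminus_diag, Rabs_R0; lra.
  - destruct (MVT_cor2 (fun t => u t - v t) (fun t => u' t - v' t) a x) as [c [Hc Hcx]].
    + lra.
    + intros t _; exact (derivable_pt_lim_minus u v t _ _ (Hu t) (Hv t)).
    + replace (u x - v x) with ((u x - v x) - (u a - v a)) by (rewrite Ha; ring).
      rewrite Hc, Rabs_mult, (Rabs_pos_eq (x - a)) by lra.
      apply Rmult_le_compat_r; [lra | apply HL; lra].
Qed.

Lemma linear_near_zero u l eps :
  derivable_pt_lim u 0 l -> u 0 = 0 -> 0 < eps ->
  exists δ, 0 < δ /\ forall x, 0 <= x < δ -> Rabs (u x - l * x) <= eps * x.
Proof.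
  intros Hd H0 Heps; destruct (Hd eps Heps) as [δ Hδ].
  exists δ; split; [apply cond_pos |]; intros x Hx.
  destruct (Req_dec x 0) as [-> | Hx0].
  - rewrite H0, Rmult_0_r, Rminus_0_r, Rabs_R0; lra.
  - specialize (Hδ x Hx0 ltac:(rewrite Rabs_pos_eq; lra)).
    rewrite Rplus_0_l, H0, Rminus_0_r in Hδ.
    replace (u x - l * x) with ((u x / x - l) * x) by (field; lra).
    rewrite Rabs_mult, (Rabs_pos_eq x) by lra.
    apply Rmult_le_compat_r; lra.
Qed.

Lemma linear_bound_near_zero u l :
  derivable_pt_lim u 0 l -> u 0 = 0 ->
  exists δ, 0 < δ /\ forall x, 0 <= x < δ -> Rabs (u x) <= (Rabs l + 1) * x.
Proof.
  intros Hd H0; destruct (linear_near_zero u l 1 Hd H0 Rlt_0_1) as [δ [Hδ Hu]].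
  exists δ; split; [exact Hδ |]; intros x Hx; specialize (Hu x Hx).
  replace (u x) with ((u x - l * x) + l * x) by ring.
  eapply Rle_trans; [apply Rabs_triang |].
  rewrite Rabs_mult, (Rabs_pos_eq x) by lra; lra.
Qed.

Lemma interval_continuation (P : R -> Prop) S δ1 δ2 :
  0 <= δ1 -> 0 < δ2 ->
  (forall x, 0 <= x <= δ1 -> P x) ->
  (forall a, δ1 <= a <= S -> P a -> forall x, a <= x <= a + δ2 -> P x) ->
  forall x, 0 <= x <= S -> P x.
Proof.
  intros Hδ1 Hδ2 P0 Pstep.
  assert (Pn : forall n, forall x, 0 <= x <= δ1 + INR n * δ2 -> x <= S -> P x).
  { induction n as [| n IH]; intros x Hx HxS.
    - apply P0; simpl in Hx; lra.
    - rewrite S_INR in Hx; pose proof (pos_INR n).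
      destruct (Rle_dec x (δ1 + INR n * δ2)) as [Hle | Hgt].
      + apply IH; lra.
      + assert (0 <= INR n * δ2) by (apply Rmult_le_pos; lra).
        apply (Pstep (δ1 + INR n * δ2)); [lra | apply IH; lra | lra]. }
  destruct (INR_unbounded (S / δ2)) as [N HN].
  intros x Hx; apply (Pn N); [| lra].
  assert (S <= INR N * δ2).
  { apply (Rmult_le_reg_r (/ δ2)); [apply Rinv_0_lt_compat; lra |].
    replace (INR N * δ2 * / δ2) with (INR N) by (field; lra); unfold Rdiv in HN; lra. }
  lra.
Qed.

Lemma small_step_exists r ρ : 0 <= r -> 0 < ρ -> exists δ, 0 < δ <= ρ /\ r * δ <= 1 / 2.
Proof.
  intros Hr Hρ; exists (Rmin ρ (/ (2 * r + 2))).
  assert (Hinv : 0 < / (2 * r + 2)) by (apply Rinv_0_lt_compat; lra).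
  pose proof (Rmin_l ρ (/ (2 * r + 2))); pose proof (Rmin_r ρ (/ (2 * r + 2))).
  split; [split; [apply Rmin_pos |]; lra |].
  eapply Rle_trans; [apply Rmult_le_compat_l; eassumption |].
  apply (Rmult_le_reg_r (2 * r + 2)); [lra |].
  rewrite Rmult_assoc, Rinv_l by lra; lra.
Qed.

(* The weight e distinguishes the singular case e = 0 (f vanishes at a and grows
   linearly) from the regular case e = 1 (f bounded below near a). *)
Section FluxBound.

Variables f f' fb fb' y y' yb yb' r rb : R -> R.
Variables a δ e c K M : R.
Hypotheses (df : is_deriv f f') (dfb : is_deriv fb fb').
Hypotheses (dy : is_deriv y y') (dyb : is_deriv yb yb').
Hypotheses (He : 0 <= e) (Hc : 0 < c) (HK : 0 <= K) (HM : 0 <= M).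
Hypothesis flux : forall t, a < t <= a + δ -> f' t * y t + f t * y' t = f t * r t.
Hypothesis fluxb : forall t, a < t <= a + δ -> fb' t * yb t + fb t * yb' t = fb t * rb t.
Hypotheses (fa : f a = fb a) (ya : y a = yb a).
Hypothesis f_close : forall t, a <= t <= a + δ -> Rabs (f t - fb t) <= M * (t - a).
Hypothesis r_close : forall t, a < t <= a + δ -> Rabs (r t) <= K /\ Rabs (r t - rb t) <= K * M.
Hypothesis b_growth :
  forall t, a <= t <= a + δ -> Rabs (fb t) <= K * (t - a + e) /\ Rabs (yb t) <= K * (t - a + e).
Hypothesis f_lower : forall t, a < t <= a + δ -> c * (t - a + e) <= f t.

Lemma flux_product_bound x : a <= x <= a + δ ->
  Rabs (f x * y x - fb x * yb x) <= (K + K ^ 2) * (x - a + e) * M * (x - a).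
Proof.
  intros Hx.
  apply (diff_bound_mvt (fun t => f t * y t) (fun t => f' t * y t + f t * y' t)
           (fun t => fb t * yb t) (fun t => fb' t * yb t + fb t * yb' t));
    [lra | intros t; exact (derivable_pt_lim_mult f y t _ _ (df t) (dy t))
    | intros t; exact (derivable_pt_lim_mult fb yb t _ _ (dfb t) (dyb t))
    | rewrite fa, ya; reflexivity |].
  intros t Ht; rewrite flux, fluxb by lra.
  replace (f t * r t - fb t * rb t) with ((f t - fb t) * r t + fb t * (r t - rb t)) by ring.
  eapply Rle_trans; [apply Rabs_triang |]; rewrite !Rabs_mult.
  destruct (r_close t) as [Hr Hrr]; [lra |]; destruct (b_growth t) as [Hfb _]; [lra |].
  specialize (f_close t ltac:(lra)).
  assert (M * (t - a) <= M * (x - a + e)) by (apply Rmult_le_compat_l; lra).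
  assert (K * (t - a + e) <= K * (x - a + e)) by (apply Rmult_le_compat_l; lra).
  assert (Rabs (f t - fb t) * Rabs (r t) <= M * (x - a + e) * K)
    by (apply Rmult_le_compat; auto using Rabs_pos; lra).
  assert (Rabs (fb t) * Rabs (r t - rb t) <= K * (x - a + e) * (K * M))
    by (apply Rmult_le_compat; auto using Rabs_pos; lra).
  lra.
Qed.

Lemma flux_difference_bound x : a < x <= a + δ ->
  Rabs (y x - yb x) <= (2 * K + K ^ 2) / c * M * (x - a).
Proof.
  intros Hx.
  assert (Hw : 0 < x - a + e) by lra.
  assert (Hfx : c * (x - a + e) <= f x) by auto.
  assert (Hf : Rabs (f x) * Rabs (y x - yb x) <= (2 * K + K ^ 2) * (x - a + e) * M * (x - a)).
  { rewrite <- Rabs_mult.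
    replace (f x * (y x - yb x)) with ((f x * y x - fb x * yb x) + yb x * (fb x - f x)) by ring.
    eapply Rle_trans; [apply Rabs_triang |]; rewrite Rabs_mult, (Rabs_minus_sym (fb x)).
    pose proof (flux_product_bound x ltac:(lra)).
    destruct (b_growth x) as [_ Hyb]; [lra |]; specialize (f_close x ltac:(lra)).
    assert (Rabs (yb x) * Rabs (f x - fb x) <= K * (x - a + e) * (M * (x - a)))
      by (apply Rmult_le_compat; auto using Rabs_pos).
    lra. }
  rewrite Rabs_pos_eq in Hf by nra.
  apply (Rmult_le_reg_l (c * (x - a + e))); [nra |].
  replace (c * (x - a + e) * ((2 * K + K ^ 2) / c * M * (x - a)))
    with ((2 * K + K ^ 2) * (x - a + e) * M * (x - a)) by (field; lra).
  eapply Rle_trans; [| exact Hf].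
  apply Rmult_le_compat_r; auto using Rabs_pos.
Qed.

End FluxBound.

Definition path_continuous (u : R -> state) : Prop :=
  forall x,
    continuity_pt (fun t => s_f (u t)) x /\ continuity_pt (fun t => s_df (u t)) x /\
    continuity_pt (fun t => s_g (u t)) x /\ continuity_pt (fun t => s_dg (u t)) x /\
    continuity_pt (fun t => s_dh (u t)) x.

Lemma path_dist_continuous u v :
  path_continuous u -> path_continuous v ->
  forall x, continuity_pt (fun t => state_dist (u t) (v t)) x.
Proof.
  intros Hu Hv x; destruct (Hu x) as (? & ? & ? & ? & ?), (Hv x) as (? & ? & ? & ? & ?).
  assert (Habs : forall p q, continuity_pt p x -> continuity_pt q x ->
            continuity_pt (fun t => Rabs (p t - q t)) x).
  { intros p q Hp Hq; apply (continuity_pt_comp (fun t => p t - q t) Rabs).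
    - exact (continuity_pt_minus p q x Hp Hq).
    - apply Rcontinuity_abs. }
  unfold state_dist; repeat apply continuity_pt_plus; apply Habs; assumption.
Qed.

Lemma path_bounded u a b :
  path_continuous u -> a <= b ->
  exists B, forall x, a <= x <= b -> state_norm (u x) <= B.
Proof.
  intros Hu Hab.
  assert (H0 : path_continuous (fun _ => State 0 0 0 0 0))
    by (intros x; repeat split; apply continuity_pt_const; intros ? ?; reflexivity).
  destruct (continuity_ab_maj (fun x => state_norm (u x)) a b Hab) as [xm [Hxm _]].
  - intros x _; exact (path_dist_continuous _ _ Hu H0 x).
  - exists (state_norm (u xm)); exact Hxm.
Qed.

Lemma continuous_pos_lower u a b :
  (forall x, continuity_pt u x) -> a <= b -> (forall x, a <= x <= b -> 0 < u x) ->
  exists m, 0 < m /\ forall x, a <= x <= b -> m <= u x.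
Proof.
  intros Hu Hab Hpos; destruct (continuity_ab_min u a b Hab) as [xm [Hxm Hxab]].
  - intros x _; apply Hu.
  - exists (u xm); split; auto.
Qed.

Lemma deriv_continuous u u' : is_deriv u u' -> forall x, continuity_pt u x.
Proof. intros Hu x; apply derivable_continuous_pt; exists (u' x); apply Hu. Qed.

Definition phase (f f1 g g1 h1 : R -> R) (s : R) : state :=
  State (f s) (f1 s) (g s) (g1 s) (h1 s).

(* The soliton equations on s > 0, with the g- and h-equations multiplied by f
   so that they stay regular where the circle fibres collapse. *)
#[local] Set Implicit Arguments.
Record soliton_ode (d Q C : R) (f f1 f2 g g1 g2 h1 h2 : R -> R) : Prop := {
  ode_df : is_deriv f f1;
  ode_df1 : is_deriv f1 f2;
  ode_dg : is_deriv g g1;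
  ode_dg1 : is_deriv g1 g2;
  ode_dh1 : is_deriv h1 h2;
  ode_f : forall s, 0 < s -> f2 s = rhs_f d Q (phase f f1 g g1 h1 s);
  ode_g : forall s, 0 < s ->
    f1 s * g1 s + f s * g2 s = f s * rhs_g d Q (phase f f1 g g1 h1 s);
  ode_h : forall s, 0 < s ->
    f1 s * h1 s + f s * h2 s = f s * rhs_h d C (phase f f1 g g1 h1 s) }.
#[local] Unset Implicit Arguments.

Lemma soliton_ode_path_continuous {d Q C f f1 f2 g g1 g2 h1 h2} :
  soliton_ode d Q C f f1 f2 g g1 g2 h1 h2 -> path_continuous (phase f f1 g g1 h1).
Proof.
  intros [df df1 dg dg1 dh1 _ _ _] x; cbn.
  repeat split; eapply deriv_continuous; eassumption.
Qed.

(* One unit each from f and g, K from f', and (2 K + K^2) / c from each of g', h'. *)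
Definition contraction_rate (K c : R) : R := 2 + K + 2 * ((2 * K + K ^ 2) / c).

Lemma contraction_rate_ge0 K c : 0 <= K -> 0 < c -> 0 <= contraction_rate K c.
Proof.
  intros HK Hc; unfold contraction_rate, Rdiv.
  pose proof (Rinv_0_lt_compat c Hc); nra.
Qed.

Section Uniqueness.

Variables d Q C : R.
Variables f f1 f2 g g1 g2 h1 h2 fb fb1 fb2 gb gb1 gb2 hb1 hb2 : R -> R.
Hypothesis ode : soliton_ode d Q C f f1 f2 g g1 g2 h1 h2.
Hypothesis odeb : soliton_ode d Q C fb fb1 fb2 gb gb1 gb2 hb1 hb2.

Local Notation sol := (phase f f1 g g1 h1).
Local Notation solb := (phase fb fb1 gb gb1 hb1).

Definition gap (x : R) : R := state_dist (sol x) (solb x).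

Definition rhs_estimate (K x : R) : Prop :=
  Rabs (rhs_f d Q (sol x) - rhs_f d Q (solb x)) <= K * gap x /\
  Rabs (rhs_g d Q (sol x) - rhs_g d Q (solb x)) <= K * gap x /\
  Rabs (rhs_h d C (sol x) - rhs_h d C (solb x)) <= K * gap x /\
  Rabs (rhs_g d Q (sol x)) <= K /\ Rabs (rhs_h d C (sol x)) <= K.

Lemma gap_continuous x : continuity_pt gap x.
Proof.
  exact (path_dist_continuous _ _ (soliton_ode_path_continuous ode)
           (soliton_ode_path_continuous odeb) x).
Qed.

Lemma gap_le_coords x M : gap x <= M ->
  Rabs (f x - fb x) <= M /\ Rabs (f1 x - fb1 x) <= M /\ Rabs (g x - gb x) <= M /\
  Rabs (g1 x - gb1 x) <= M /\ Rabs (h1 x - hb1 x) <= M.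
Proof.
  intros HM; destruct (state_dist_coord (sol x) (solb x)) as (? & ? & ? & ? & ?).
  unfold gap in HM; cbn in *; lra.
Qed.

Lemma gap_eq0 x : gap x = 0 ->
  f x = fb x /\ f1 x = fb1 x /\ g x = gb x /\ g1 x = gb1 x /\ h1 x = hb1 x.
Proof.
  intros H0; apply state_dist_eq0 in H0.
  injection H0; auto.
Qed.

Lemma rhs_estimates T : 0 <= T ->
  (forall x, 0 <= x <= T -> 0 < g x /\ 0 < gb x) ->
  exists K0, 0 <= K0 /\ forall K x, K0 <= K -> 0 <= x <= T -> rhs_estimate K x.
Proof.
  intros HT Hg.
  destruct (path_bounded _ 0 T (soliton_ode_path_continuous ode) HT) as [B1 HB1].
  destruct (path_bounded _ 0 T (soliton_ode_path_continuous odeb) HT) as [B2 HB2].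
  destruct (continuous_pos_lower g 0 T (deriv_continuous _ _ (ode_dg ode))
              HT (fun x Hx => proj1 (Hg x Hx))) as [m1 [Hm1 Hgm]].
  destruct (continuous_pos_lower gb 0 T (deriv_continuous _ _ (ode_dg odeb))
              HT (fun x Hx => proj2 (Hg x Hx))) as [m2 [Hm2 Hgbm]].
  set (B := Rmax B1 B2); set (m := Rmin m1 m2).
  assert (Hbox : forall x, 0 <= x <= T -> state_box B m (sol x) /\ state_box B m (solb x)).
  { intros x Hx; unfold state_box, B, m; cbn.
    specialize (HB1 x Hx); specialize (HB2 x Hx); specialize (Hgm x Hx); specialize (Hgbm x Hx).
    pose proof (Rmax_l B1 B2); pose proof (Rmax_r B1 B2);
    pose proof (Rmin_l m1 m2); pose proof (Rmin_r m1 m2).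
    repeat split; lra. }
  destruct (rhs_bounded_lipschitz d Q C B m ltac:(apply Rmin_pos; auto))
    as ([K1 [HK1 Hf]] & [K2 [HK2 Hg']] & [K3 [HK3 Hh]]).
  exists (K1 + K2 + K3); split; [lra |].
  intros K x HK Hx; destruct (Hbox x Hx) as [Bu Bv].
  destruct (Hf _ _ Bu Bv) as [_ Ef], (Hg' _ _ Bu Bv) as [Bg Eg], (Hh _ _ Bu Bv) as [Bh Eh].
  assert (Hmono : forall k, 0 <= k -> k <= K -> k * gap x <= K * gap x)
    by (intros; apply Rmult_le_compat_r; [apply state_dist_ge0 | lra]).
  repeat split; try lra; eapply Rle_trans; [exact Ef | | exact Eg | | exact Eh |];
    apply Hmono; lra.
Qed.

Section Step.

Variables a δ e c K : R.
Hypotheses (Ha : 0 <= a) (He : 0 <= e) (Hc : 0 < c) (HK : 0 <= K).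
Hypothesis gap_a : gap a = 0.
Hypothesis f_lower : forall x, a < x <= a + δ -> c * (x - a + e) <= f x.
Hypothesis b_growth : forall x, a <= x <= a + δ ->
  Rabs (fb x) <= K * (x - a + e) /\ Rabs (gb1 x) <= K * (x - a + e) /\
  Rabs (hb1 x) <= K * (x - a + e).
Hypothesis rhs_est : forall x, a < x <= a + δ -> rhs_estimate K x.

Section Growth.

Variable M : R.
Hypothesis HM : 0 <= M.
Hypothesis gap_le : forall x, a <= x <= a + δ -> gap x <= M.

Let Ea := gap_eq0 a gap_a.

Lemma f_diff_bound x : a <= x <= a + δ -> Rabs (f x - fb x) <= M * (x - a).
Proof.
  intros Hx; apply (diff_bound_mvt f f1 fb fb1);
    [lra | exact (ode_df ode) | exact (ode_df odeb) | apply Ea |].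
  intros t Ht; apply (gap_le_coords t M (gap_le t ltac:(lra))).
Qed.

Lemma g_diff_bound x : a <= x <= a + δ -> Rabs (g x - gb x) <= M * (x - a).
Proof.
  intros Hx; apply (diff_bound_mvt g g1 gb gb1);
    [lra | exact (ode_dg ode) | exact (ode_dg odeb) | apply Ea |].
  intros t Ht; apply (gap_le_coords t M (gap_le t ltac:(lra))).
Qed.

Lemma df_diff_bound x : a <= x <= a + δ -> Rabs (f1 x - fb1 x) <= K * M * (x - a).
Proof.
  intros Hx; apply (diff_bound_mvt f1 f2 fb1 fb2);
    [lra | exact (ode_df1 ode) | exact (ode_df1 odeb) | apply Ea |].
  intros t Ht; rewrite (ode_f ode), (ode_f odeb) by lra.
  destruct (rhs_est t ltac:(lra)) as [E _]; eapply Rle_trans; [exact E |].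
  apply Rmult_le_compat_l; [lra | apply gap_le; lra].
Qed.

Lemma dg_diff_bound x : a < x <= a + δ ->
  Rabs (g1 x - gb1 x) <= (2 * K + K ^ 2) / c * M * (x - a).
Proof.
  apply (flux_difference_bound f f1 fb fb1 g1 g2 gb1 gb2
           (fun s => rhs_g d Q (sol s)) (fun s => rhs_g d Q (solb s)) a δ e c K M);
    try first [ exact (ode_df ode) | exact (ode_df odeb) | exact (ode_dg1 ode)
              | exact (ode_dg1 odeb) | exact f_diff_bound | apply Ea | assumption ].
  - intros t Ht; apply (ode_g ode); lra.
  - intros t Ht; apply (ode_g odeb); lra.
  - intros t Ht; destruct (rhs_est t Ht) as (_ & E & _ & B & _); split; [exact B |].
    eapply Rle_trans; [exact E | apply Rmult_le_compat_l; [lra | apply gap_le; lra]].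
  - intros t Ht; destruct (b_growth t Ht) as (? & ? & _); split; assumption.
Qed.

Lemma dh_diff_bound x : a < x <= a + δ ->
  Rabs (h1 x - hb1 x) <= (2 * K + K ^ 2) / c * M * (x - a).
Proof.
  apply (flux_difference_bound f f1 fb fb1 h1 h2 hb1 hb2
           (fun s => rhs_h d C (sol s)) (fun s => rhs_h d C (solb s)) a δ e c K M);
    try first [ exact (ode_df ode) | exact (ode_df odeb) | exact (ode_dh1 ode)
              | exact (ode_dh1 odeb) | exact f_diff_bound | apply Ea | assumption ].
  - intros t Ht; apply (ode_h ode); lra.
  - intros t Ht; apply (ode_h odeb); lra.
  - intros t Ht; destruct (rhs_est t Ht) as (_ & _ & E & _ & B); split; [exact B |].
    eapply Rle_trans; [exact E | apply Rmult_le_compat_l; [lra | apply gap_le; lra]].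
  - intros t Ht; destruct (b_growth t Ht) as (? & _ & ?); split; assumption.
Qed.

Lemma gap_linear_growth x : a <= x <= a + δ ->
  gap x <= contraction_rate K c * M * (x - a).
Proof.
  intros Hx; destruct (Req_dec x a) as [-> | Hxa].
  { rewrite gap_a, Rminus_diag, Rmult_0_r; lra. }
  pose proof (f_diff_bound x Hx); pose proof (g_diff_bound x Hx);
  pose proof (df_diff_bound x Hx); pose proof (dg_diff_bound x ltac:(lra));
  pose proof (dh_diff_bound x ltac:(lra)).
  unfold gap, state_dist, contraction_rate; cbn; lra.
Qed.

End Growth.

Lemma gap_vanishes_on_step : 0 < δ -> contraction_rate K c * δ <= 1 / 2 ->
  forall x, a <= x <= a + δ -> gap x = 0.
Proof.
  intros Hδ Hsmall.
  destruct (continuity_ab_maj gap a (a + δ)) as [xm [Hxm Hxmδ]];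
    [lra | intros; apply gap_continuous |].
  set (M := gap xm) in *.
  assert (HM : 0 <= M) by apply state_dist_ge0.
  assert (M <= M / 2).
  { eapply Rle_trans; [apply (gap_linear_growth M HM Hxm xm Hxmδ) |].
    replace (M / 2) with (M * (1 / 2)) by field.
    replace (contraction_rate K c * M * (xm - a)) with (M * (contraction_rate K c * (xm - a)))
      by ring.
    apply Rmult_le_compat_l; [exact HM |].
    eapply Rle_trans; [| exact Hsmall].
    apply Rmult_le_compat_l; [apply contraction_rate_ge0; assumption | lra]. }
  intros x Hx; pose proof (Hxm x Hx); pose proof (state_dist_ge0 (sol x) (solb x)).
  unfold gap in *; lra.
Qed.

End Step.

Hypotheses (f0 : f 0 = 0) (fb0 : fb 0 = 0) (df0 : f1 0 = 1) (dfb0 : fb1 0 = 1).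
Hypotheses (dg0 : g1 0 = 0) (dgb0 : gb1 0 = 0) (dh0 : h1 0 = 0) (dhb0 : hb1 0 = 0).
Hypothesis g0 : g 0 = gb 0.
Hypothesis f_pos : forall s, 0 < s -> 0 < f s.
Hypotheses (g_pos : forall s, 0 <= s -> 0 < g s) (gb_pos : forall s, 0 <= s -> 0 < gb s).

Lemma gap_vanishes_near_0 : exists δ, 0 < δ /\ forall x, 0 <= x <= δ -> gap x = 0.
Proof.
  destruct (rhs_estimates 1 ltac:(lra)
              (fun x Hx => conj (g_pos x (proj1 Hx)) (gb_pos x (proj1 Hx))))
    as [K0 [HK0 Hest]].
  destruct (linear_near_zero f 1 (1 / 2) ltac:(rewrite <- df0; apply (ode_df ode)) f0
              ltac:(lra)) as [δf [Hδf Hf]].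
  destruct (linear_bound_near_zero fb (fb1 0) (ode_df odeb 0) fb0) as [δa [Hδa Ha]].
  destruct (linear_bound_near_zero gb1 (gb2 0) (ode_dg1 odeb 0) dgb0) as [δb [Hδb Hb]].
  destruct (linear_bound_near_zero hb1 (hb2 0) (ode_dh1 odeb 0) dhb0) as [δc [Hδc Hc]].
  set (K := K0 + (Rabs (fb1 0) + 1) + (Rabs (gb2 0) + 1) + (Rabs (hb2 0) + 1)).
  pose proof (Rabs_pos (fb1 0)); pose proof (Rabs_pos (gb2 0)); pose proof (Rabs_pos (hb2 0)).
  set (ρ := Rmin (Rmin 1 δf) (Rmin δa (Rmin δb δc)) / 2).
  assert (Hρ : 0 < ρ) by (unfold ρ; apply Rdiv_lt_0_compat; [repeat apply Rmin_pos |]; lra).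
  destruct (small_step_exists (contraction_rate K (1 / 2)) ρ) as [δ [Hδ Hsmall]];
    [apply contraction_rate_ge0; unfold K; lra | exact Hρ |].
  assert (Hδs : δ < 1 /\ δ < δf /\ δ < δa /\ δ < δb /\ δ < δc).
  { unfold ρ in Hδ.
    pose proof (Rmin_l 1 δf); pose proof (Rmin_r 1 δf); pose proof (Rmin_l δb δc);
    pose proof (Rmin_r δb δc); pose proof (Rmin_l δa (Rmin δb δc));
    pose proof (Rmin_r δa (Rmin δb δc));
    pose proof (Rmin_l (Rmin 1 δf) (Rmin δa (Rmin δb δc)));
    pose proof (Rmin_r (Rmin 1 δf) (Rmin δa (Rmin δb δc))).
    lra. }
  exists δ; split; [lra |].
  replace δ with (0 + δ) by ring.
  apply (gap_vanishes_on_step 0 δ 0 (1 / 2) K); try lra.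
  - unfold K; lra.
  - unfold gap, state_dist; cbn.
    rewrite f0, fb0, df0, dfb0, g0, dg0, dgb0, dh0, dhb0, !Rminus_diag, Rabs_R0; ring.
  - intros x Hx; specialize (Hf x ltac:(lra)).
    pose proof (Rle_abs (- (f x - 1 * x))); rewrite Rabs_Ropp in *; lra.
  - intros x Hx; specialize (Ha x ltac:(lra)); specialize (Hb x ltac:(lra));
      specialize (Hc x ltac:(lra)).
    assert (Hk : forall k, k <= K -> k * x <= K * (x - 0 + 0))
      by (intros; rewrite Rminus_0_r, Rplus_0_r; apply Rmult_le_compat_r; lra).
    repeat split; (eapply Rle_trans; [eassumption | apply Hk; unfold K; lra]).
  - intros x Hx; apply Hest; [unfold K; lra | lra].
Qed.

Lemma gap_vanishes_forward δ1 S : 0 < δ1 -> 0 <= S ->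
  exists δ2, 0 < δ2 /\
    forall a, δ1 <= a <= S -> gap a = 0 -> forall x, a <= x <= a + δ2 -> gap x = 0.
Proof.
  intros Hδ1 HS; set (T := δ1 + S + 1).
  destruct (rhs_estimates T ltac:(unfold T; lra)
              (fun x Hx => conj (g_pos x (proj1 Hx)) (gb_pos x (proj1 Hx))))
    as [K0 [HK0 Hest]].
  destruct (path_bounded _ 0 T (soliton_ode_path_continuous odeb) ltac:(unfold T; lra))
    as [B HB].
  destruct (continuous_pos_lower f δ1 T (deriv_continuous _ _ (ode_df ode))
              ltac:(unfold T; lra) (fun x Hx => f_pos x ltac:(lra))) as [mf [Hmf Hfm]].
  set (K := K0 + Rabs B); pose proof (Rabs_pos B); pose proof (Rle_abs B).
  destruct (small_step_exists (contraction_rate K (mf / 2)) 1) as [δ2 [Hδ2 Hsmall]];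
    [apply contraction_rate_ge0; unfold K; lra | lra |].
  exists δ2; split; [lra |]; intros a Ha Hgap.
  apply (gap_vanishes_on_step a δ2 1 (mf / 2) K); try (unfold K; lra); try assumption.
  - intros x Hx; specialize (Hfm x ltac:(unfold T; lra)).
    assert (mf / 2 * (x - a + 1) <= mf / 2 * 2) by (apply Rmult_le_compat_l; lra).
    lra.
  - intros x Hx; destruct (state_norm_coord (solb x)) as (Nf & _ & _ & Ndg & Ndh); cbn in *.
    specialize (HB x ltac:(unfold T; lra)).
    assert (Hk : B <= K * (x - a + 1)).
    { apply (Rle_trans _ K); [unfold K; lra |].
      rewrite <- (Rmult_1_r K) at 1; apply Rmult_le_compat_l; unfold K; lra. }
    repeat split; lra.
  - intros x Hx; apply Hest; [unfold K; lra | unfold T; lra].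
Qed.

Lemma gap_vanishes S : 0 <= S -> forall x, 0 <= x <= S -> gap x = 0.
Proof.
  intros HS; destruct gap_vanishes_near_0 as [δ1 [Hδ1 Hnear]].
  destruct (gap_vanishes_forward δ1 S Hδ1 HS) as [δ2 [Hδ2 Hforward]].
  exact (interval_continuation (fun x => gap x = 0) S δ1 δ2 ltac:(lra) Hδ2 Hnear Hforward).
Qed.

Lemma solutions_coincide x : 0 <= x ->
  f x = fb x /\ f1 x = fb1 x /\ g x = gb x /\ g1 x = gb1 x /\ h1 x = hb1 x.
Proof. intros Hx; apply gap_eq0, (gap_vanishes x Hx); lra. Qed.

End Uniqueness.

Arguments solutions_coincide {d Q C f f1 f2 g g1 g2 h1 h2 fb fb1 fb2 gb gb1 gb2 hb1 hb2}.

Lemma even_deriv_0 u u' : is_deriv u u' -> (forall x, u (- x) = u x) -> u' 0 = 0.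
Proof.
  intros Hu Heven.
  assert (Hopp : derivable_pt_lim (fun x => - x) 0 (-1))
    by exact (derivable_pt_lim_opp id 0 1 (derivable_pt_lim_id 0)).
  pose proof (derivable_pt_lim_comp (fun x => - x) u 0 _ _ Hopp (Hu (- 0))) as Hcomp.
  apply (derivable_pt_lim_ext _ u) in Hcomp; [| intros x; apply Heven].
  pose proof (uniqueness_limite u 0 _ _ Hcomp (Hu 0)); rewrite Ropp_0 in *; lra.
Qed.

Lemma soliton_equations_ode d q C f f1 f2 g g1 g2 h1 h2 :
  0 < f -> 0 < g ->
  Rc_ss d f f1 f2 g g1 g2 = h2 ->
  Rc_vv d q f f1 f2 g g1 g2 = h1 * f1 / f ->
  Rc_hh d q f f1 f2 g g1 g2 = h1 * g1 / g ->
  scal d q f f1 f2 g g1 g2 + h1 ^ 2 = C ->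
  f2 = rhs_f d (q * (d + 2)) (State f f1 g g1 h1) /\
  f1 * g1 + f * g2 = f * rhs_g d (q * (d + 2)) (State f f1 g g1 h1) /\
  f1 * h1 + f * h2 = f * rhs_h d C (State f f1 g g1 h1).
Proof.
  intros Hf Hg Ess Evv Ehh Escal.
  unfold scal in Escal; rewrite Ess, Evv, Ehh in Escal.
  unfold Rc_vv in Evv; unfold Rc_hh in Ehh; unfold rhs_f, rhs_g, rhs_h; cbn.
  split; [| split].
  - replace f2 with (- (- f2 / f) * f) by (field; lra).
    replace (- f2 / f) with (h1 * f1 / f + d * f1 * g1 / (f * g)
      - d * (q * (d + 2)) ^ 2 * f ^ 2 / (4 * g ^ 4)) by lra.
    field; lra.
  - replace g2 with (- (- g2 / g) * g) by (field; lra).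
    replace (- g2 / g) with (h1 * g1 / g + (d - 1) * (g1 / g) ^ 2 + f1 * g1 / (f * g)
      - (d + 2) / g ^ 2 + (q * (d + 2)) ^ 2 * f ^ 2 / (2 * g ^ 4)) by lra.
    field; lra.
  - replace h2 with (C - h1 ^ 2 - h1 * f1 / f - d * (h1 * g1 / g)) by lra.
    field; lra.
Qed.

Lemma steady_soliton_ode d q C f g h : steady_soliton d q C f g h ->
  exists f1 f2 g1 g2 h1 h2, is_deriv h h1 /\
    soliton_ode d (q * (d + 2)) C f f1 f2 g g1 g2 h1 h2 /\
    f 0 = 0 /\ f1 0 = 1 /\ g1 0 = 0 /\ h1 0 = 0 /\
    (forall s, 0 < s -> 0 < f s) /\ (forall s, 0 <= s -> 0 < g s).
Proof.
  intros (f1 & f2 & g1 & g2 & h1 & h2 & _ & _ & _ & df & df1 & dg & dg1 & dh & dh1 &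
          f_odd & g_even & h_even & df0 & f_pos & g_pos & Ric & Scal).
  assert (E : forall s, 0 < s ->
            f2 s = rhs_f d (q * (d + 2)) (phase f f1 g g1 h1 s) /\
            f1 s * g1 s + f s * g2 s = f s * rhs_g d (q * (d + 2)) (phase f f1 g g1 h1 s) /\
            f1 s * h1 s + f s * h2 s = f s * rhs_h d C (phase f f1 g g1 h1 s)).
  { intros s Hs; destruct (Ric s Hs) as (Ess & Evv & Ehh).
    apply soliton_equations_ode; auto; apply g_pos; lra. }
  exists f1, f2, g1, g2, h1, h2; split; [exact dh | split].
  { constructor; auto; intros s Hs; destruct (E s Hs) as (? & ? & ?); assumption. }
  repeat split; auto.
  - specialize (f_odd 0); rewrite Ropp_0 in f_odd; lra.
  - exact (even_deriv_0 g g1 dg g_even).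
  - exact (even_deriv_0 h h1 dh h_even).
Qed.

Theorem theorem4p2 (m : nat) (q C : R) (f g h fb gb hb : R -> R) :
  (1 <= m)%nat ->
  steady_soliton (INR (2 * m)) q C f g h ->
  steady_soliton (INR (2 * m)) q C fb gb hb ->
  g 0 = gb 0 ->
  0 < C ->
  forall s, 0 <= s ->
    f s = fb s /\ g s = gb s /\
    (forall a b, derivable_pt_lim h s a -> derivable_pt_lim hb s b -> a = b).
Proof.
  intros _ Hsol Hsolb Hg0 _ s Hs.
  destruct (steady_soliton_ode _ _ _ _ _ _ Hsol)
    as (f1 & f2 & g1 & g2 & h1 & h2 & dh & ode & f0 & df0 & dg0 & dh0 & f_pos & g_pos).
  destruct (steady_soliton_ode _ _ _ _ _ _ Hsolb)
    as (fb1 & fb2 & gb1 & gb2 & hb1 & hb2 & dhb & odeb & fb0 & dfb0 & dgb0 & dhb0 & _ & gb_pos).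
  destruct (solutions_coincide ode odeb f0 fb0 df0 dfb0 dg0 dgb0 dh0 dhb0 Hg0
              f_pos g_pos gb_pos s Hs) as (Ef & _ & Eg & _ & Eh).
  split; [exact Ef | split; [exact Eg |]].
  intros a b Ha Hb.
  rewrite (uniqueness_limite h s a (h1 s) Ha (dh s)),
          (uniqueness_limite hb s b (hb1 s) Hb (dhb s)).
  exact Eh.
Qed.
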